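(* Let $f:\mathbb{Z}\to\mathbb{R}$ be a function of bounded variation, i.e. $\mathrm{Var}(f)=\sum_{n\in\mathbb{Z}}|f(n+1)-f(n)|<\infty$. Then $$\mathrm{Var}(\widetilde{M}f)\le \mathrm{Var}(f),$$ and the constant $1$ is best possible: there is no constant $C<1$ such that $\mathrm{Var}(\widetilde{M}f)\le C\,\mathrm{Var}(f)$ holds for all functions $f:\mathbb{Z}\to\mathbb{R}$ of bounded variation.
   Context: Let $\mathbb{Z}^+=\{0,1,2,\dots\}$. For $f:\mathbb{Z}\to\mathbb{R}$, the discrete non-centered Hardy–Littlewood maximal operator is $$\widetilde{M}f(n)=\sup_{r,s\in\mathbb{Z}^+}\frac{1}{r+s+1}\sum_{k=-r}^{s}|f(n+k)|,\qquad n\in\mathbb{Z}.$$ The total variation of $g:\mathbb{Z}\to\mathbb{R}$ is $\mathrm{Var}(g)=\sum_{n=-\infty}^{\infty}|g(n+1)-g(n)|$. *)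

From HB Require Import structures.
From mathcomp Require Import all_boot all_order all_algebra.
From mathcomp Require Import all_classical all_reals all_analysis.
Set Implicit Arguments. Unset Strict Implicit. Unset Printing Implicit Defensive.
Import Order.TTheory GRing.Theory Num.Theory.
Local Open Scope classical_set_scope.
Local Open Scope ring_scope.

Definition window_avg (R : realType) (f : int -> R) (n : int) (r s : nat) : R :=
  (\sum_(k < r + s + 1) `|f (n - r%:Z + k%:Z)|) / (r + s + 1)%:R.

(* Discrete non-centered Hardy-Littlewood maximal operator:
   sup over r, s in Z^+ of the window averages (real supremum `sup`;
   the set is bounded whenever f is bounded, e.g. of bounded variation). *)
Definition maxop (R : realType) (f : int -> R) (n : int) : R :=
  sup [set window_avg f n r s | r in [set: nat] & s in [set: nat]].

Definition Var (R : realType) (g : int -> R) : \bar R :=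
  \esum_(n in [set: int]) (`|g (n + 1) - g n|)%:E.

From HB Require Import structures.
From mathcomp Require Import all_boot all_order all_algebra.
From mathcomp Require Import all_classical all_reals all_analysis.
From mathcomp Require Import finmap.
From mathcomp Require Import zify ring lra.
Import Order.TTheory GRing.Theory Num.Theory.
Set Implicit Arguments. Unset Strict Implicit. Unset Printing Implicit Defensive.
Local Open Scope classical_set_scope.
Local Open Scope ring_scope.

(* Write g for the maximal function of f and h = |f|, so that h <= g.  If a
   window realises g(x) up to eta and y is a point of it with h(y) > g(x) - eta,
   then every p with g(p) <= g(x) - eta lies outside the window, hence beyond y
   as seen from x.  So a fall of g from x is preceded by a point y where h has
   almost reached g(x), and a rise of g starts from a value at least that of h.
   Walking along an interval, this matches the variation of g, up to an
   arbitrarily small error, with the variation of h, hence of f, on some other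
   interval.  The constant 1 is sharp: the indicator of {0} has variation 2,
   while its maximal function is 1 at 0 and at most 1/(N+1) at -N and N. *)

Section PartialVariation.
Variable R : realType.
Implicit Types (f : int -> R) (a b : int) (k l : nat).

Definition pvar f a k : R := \sum_(i < k) `|f (a + i%:Z + 1) - f (a + i%:Z)|.

Lemma pvarS f a k : pvar f a k.+1 = pvar f a k + `|f (a + k%:Z + 1) - f (a + k%:Z)|.
Proof. by rewrite /pvar big_ord_recr. Qed.

Lemma pvarD f a k l : pvar f a (k + l) = pvar f a k + pvar f (a + k%:Z) l.
Proof.
rewrite /pvar big_split_ord /=; congr (_ + _); apply: eq_bigr => i _.
by rewrite PoszD !addrA.
Qed.

Lemma ler_dist_pvar f a k : `|f (a + k%:Z) - f a| <= pvar f a k.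
Proof.
elim: k => [|k IH]; first by rewrite addr0 subrr normr0 /pvar big_ord0.
rewrite pvarS -addn1 PoszD addrA.
have := ler_normD (f (a + k%:Z + 1) - f (a + k%:Z)) (f (a + k%:Z) - f a).
rewrite addrA subrK; lra.
Qed.

Definition varI f a b : R := pvar f a `|b - a|%N.

Lemma varID f a b c : a <= b -> b <= c -> varI f a c = varI f a b + varI f b c.
Proof.
move=> ab bc; rewrite /varI.
have -> : `|c - a|%N = (`|b - a| + `|c - b|)%N by lia.
rewrite pvarD; congr (_ + _); congr pvar; lia.
Qed.

Lemma ler_dist_varI f a b : a <= b -> `|f b - f a| <= varI f a b.
Proof.
by move=> ab; have := ler_dist_pvar f a `|b - a|%N; have -> : a + `|b - a|%N = b by lia.
Qed.

Section ExtendedReal.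
Local Open Scope ereal_scope.

Lemma pvarE f a k :
  \sum_(n \in [set (a + i%:Z)%R | i in `I_k]) (`|f (n + 1) - f n|)%:E = (pvar f a k)%:E.
Proof.
rewrite fsbig_image; last by move=> i j _ _ /addrI [].
by rewrite -fsbig_ord sumEFin.
Qed.

Lemma pvar_le_Var f a k : (pvar f a k)%:E <= Var f.
Proof.
rewrite -pvarE; apply: esum_ge; exists [set (a + i%:Z)%R | i in `I_k] => //; split => //.
exact: finite_image (finite_II k).
Qed.

(* Every finite set of integers lies in some [-M, M], so partial variations exhaust [Var]. *)
Lemma Var_le f (V : \bar R) : (forall a k, (pvar f a k)%:E <= V) -> Var f <= V.
Proof.
move=> le_pvarV; apply: ge_ereal_sup => _ [X [finX _] <-].
pose M := (\sum_(x <- fset_set X) `|x|)%N.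
have XM x : X x -> (`|x| <= M)%N.
  move=> Xx; have xX : x \in fset_set X by rewrite in_fset_set //; apply/mem_set.
  by rewrite /M (bigD1_seq x) //= ?fset_uniq // leq_addr.
have subX : X `<=` [set (- M%:Z + i%:Z)%R | i in `I_(M + M).+1].
  by move=> x /XM xM; exists `|(x + M%:Z)%R|%N; rewrite /=; lia.
apply: le_trans (le_pvarV (- M%:Z)%R (M + M).+1); rewrite -pvarE.
apply: lee_fsum_nneg_subset => //; first exact: finite_image (finite_II _).
exact/subsetP.
Qed.

Lemma Var_ge0 f : 0 <= Var f.
Proof. by apply: esum_ge0 => n _; rewrite lee_fin. Qed.

Lemma fineK_Var f : Var f < +oo -> Var f = (fine (Var f))%:E.
Proof. by move=> Vf; rewrite fineK // ge0_fin_numE // Var_ge0. Qed.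

Lemma pvar_le_fine f a k : Var f < +oo -> (pvar f a k <= fine (Var f))%R.
Proof. by move=> Vf; rewrite -lee_fin -fineK_Var //; apply: pvar_le_Var. Qed.

End ExtendedReal.

Lemma norm_le_Var f : (Var f < +oo)%E -> forall j, `|f j| <= `|f 0| + fine (Var f).
Proof.
move=> Vf j; have := lerB_dist (f j) (f 0).
have [j0|j0] := leP 0 j.
- have := ler_dist_pvar f 0 (absz j); have -> : 0 + (absz j)%:Z = j by lia.
  have := pvar_le_fine 0 (absz j) Vf; lra.
- have := ler_dist_pvar f j (absz j); have -> : j + (absz j)%:Z = 0 by lia.
  have := pvar_le_fine j (absz j) Vf; rewrite distrC; lra.
Qed.

End PartialVariation.

Section Charging.
Variables (R : realType) (g h : int -> R) (W : int -> int -> R).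
Hypothesis h_le_g : forall n, h n <= g n.
Hypothesis separation : forall x eta, 0 < eta -> exists y, g x - eta < h y /\
  forall p, g p <= g x - eta -> (p <= x -> p < y) /\ (x <= p -> y < p).
Hypothesis WD : forall a b c, a <= b -> b <= c -> W a c = W a b + W b c.
Hypothesis W_ge_dist : forall a b, a <= b -> `|h b - h a| <= W a b.

Lemma W_ge_rise a b : a <= b -> h b - h a <= W a b.
Proof. by move=> ab; apply: le_trans (W_ge_dist ab); apply: ler_norm. Qed.

Lemma W_ge_fall a b : a <= b -> h a - h b <= W a b.
Proof. by move=> ab; apply: le_trans (W_ge_dist ab); rewrite distrC ler_norm. Qed.

Lemma separating_point x p q eps : 0 < eps -> g p < g x -> g q < g x ->
  exists y, [/\ g x - eps < h y,
    (p <= x -> p < y) /\ (x <= p -> y < p) & (q <= x -> q < y) /\ (x <= q -> y < q)].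
Proof.
move=> eps_gt0 gpx gqx.
pose eta := Num.min eps (Num.min (g x - g p) (g x - g q)).
have eta_gt0 : 0 < eta by rewrite !lt_min eps_gt0 !subr_gt0 gpx gqx.
have eta_eps : eta <= eps by rewrite ge_min lexx.
have eta_p : eta <= g x - g p by rewrite !ge_min lexx orbT.
have eta_q : eta <= g x - g q by rewrite !ge_min lexx !orbT.
have [y [hy sep]] := separation x eta_gt0.
by exists y; split; [lra | apply: sep; lra | apply: sep; lra].
Qed.

(* Invariant of a walk from [A] to [n] along which [g] has varied by [v], up
   to the error [e]: the variation is charged either to any later fall of [h]
   (first case), or to any later rise of [h] after a point [m] where [g] was
   lower (second case), or not yet charged because [g] has essentially only
   risen (third case). *)
Definition charged (A n : int) (v e : R) : Prop :=
  [\/ exists c, v <= c - g n + e /\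
        forall z, n <= z -> exists2 a, a <= z & c - h z <= W a z,
      exists m c, [/\ m <= n, g m < g n, v <= c + g n + e &
        forall z, m < z -> exists2 a, a <= z & c + h z <= W a z]
    | v <= g n - g A + e].

Lemma charged_step_fall A n v e eps c : 0 < eps -> v <= c - g n + e ->
    (forall z, n <= z -> exists2 a, a <= z & c - h z <= W a z) ->
  charged A (n + 1) (v + `|g (n + 1) - g n|) (e + 2 * eps).
Proof.
move=> eps_gt0 vc Wc; have [gn1|gn1] := leP (g (n + 1)) (g n).
- apply: Or31; exists c; split; first by rewrite distrC ger0_norm ?subr_ge0; lra.
  by move=> z nz; apply: Wc; lia.
- apply: Or32; exists n, (c - 2 * h n); split => //; first lia.
    by rewrite ger0_norm ?subr_ge0 ?ltW //; have := h_le_g n; lra.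
  move=> z nz; have [a an Wa] := Wc n (lexx _); exists a; first lia.
  by rewrite (WD an (ltW nz)); have := W_ge_rise (ltW nz); lra.
Qed.

Lemma charged_step_rise A n v e eps m c :
    0 < eps -> m <= n -> g m < g n -> v <= c + g n + e ->
    (forall z, m < z -> exists2 a, a <= z & c + h z <= W a z) ->
  charged A (n + 1) (v + `|g (n + 1) - g n|) (e + 2 * eps).
Proof.
move=> eps_gt0 mn gmn vc Wc; have [gn1|gn1] := leP (g n) (g (n + 1)).
- apply: Or32; exists m, c; split => //; [lia | exact: lt_le_trans gn1 |].
  by rewrite ger0_norm ?subr_ge0 //; lra.
- have [y [hy [my _] [_ yn1]]] := separating_point eps_gt0 gmn gn1.
  have {}my := my mn; have {}yn1 := yn1 ltac:(lia).
  apply: Or31; exists (c + 2 * h y); split.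
    by rewrite distrC ger0_norm ?subr_ge0 ?ltW //; lra.
  move=> z n1z; have yz : y <= z by lia.
  have [a ay Wa] := Wc y my; exists a; first lia.
  by rewrite (WD ay yz); have := W_ge_fall yz; lra.
Qed.

Lemma charged_step_monotone A n v e eps : A <= n -> 0 < eps -> v <= g n - g A + e ->
  charged A (n + 1) (v + `|g (n + 1) - g n|) (e + 2 * eps).
Proof.
move=> An eps_gt0 vA; have [gn1|gn1] := leP (g n) (g (n + 1)).
  by apply: Or33; rewrite ger0_norm ?subr_ge0 //; lra.
have n_n1 : n <= n + 1 by lia.
have [gA|gA] := leP (g A + eps) (g n).
- have gAn : g A < g n by lra.
  have [y [hy [Ay _] [_ yn1]]] := separating_point eps_gt0 gAn gn1.
  have {}Ay := Ay An; have {}yn1 := yn1 n_n1.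
  apply: Or31; exists (2 * h y - h A); split.
    by rewrite distrC ger0_norm ?subr_ge0 ?ltW //; have := h_le_g A; lra.
  move=> z n1z; exists A; first lia.
  rewrite (WD (a := A) (b := y)); [|lia|lia].
  by have := W_ge_rise (ltW Ay); have := @W_ge_fall y z ltac:(lia); lra.
- have [y [hy _ [_ yn1]]] := separating_point eps_gt0 gn1 gn1.
  have {}yn1 := yn1 n_n1.
  apply: Or31; exists (h y); split.
    by rewrite distrC ger0_norm ?subr_ge0 ?ltW //; lra.
  by move=> z n1z; exists y; [lia | have := @W_ge_fall y z ltac:(lia); lra].
Qed.

Lemma charged_step A n v e eps : A <= n -> 0 < eps -> charged A n v e ->
  charged A (n + 1) (v + `|g (n + 1) - g n|) (e + 2 * eps).
Proof.
move=> An eps_gt0 [[c [vc Wc]] | [m [c [mn gmn vc Wc]]] | vA].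
- exact: charged_step_fall eps_gt0 vc Wc.
- exact: charged_step_rise eps_gt0 mn gmn vc Wc.
- exact: charged_step_monotone An eps_gt0 vA.
Qed.

Lemma charged_pvar A eps k : 0 < eps ->
  charged A (A + k%:Z) (pvar g A k) (eps * (2 * k)%:R).
Proof.
move=> eps_gt0; elim: k => [|k IH].
  by apply: Or33; rewrite /pvar big_ord0 addr0 subrr mulr0 addr0.
have -> : A + k.+1%:Z = A + k%:Z + 1 by rewrite -addn1 PoszD addrA.
have -> : eps * (2 * k.+1)%:R = eps * (2 * k)%:R + 2 * eps.
  by rewrite mulnS natrD mulrDr addrC [eps * 2%:R]mulrC.
by rewrite pvarS; apply: charged_step => //; rewrite lerDl.
Qed.

Lemma charged_le_W A n v e eps : A <= n -> 0 < eps -> 0 <= e -> charged A n v e ->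
  exists a b, a <= b /\ v <= W a b + e + eps.
Proof.
move=> An eps_gt0 e_ge0.
case=> [[c [vc Wc]] | [m [c [mn gmn vc Wc]]] | vA].
- have [a an Wa] := Wc n (lexx _); exists a, n; split => //.
  by have := h_le_g n; lra.
- have [y [hy [my _] _]] := separating_point eps_gt0 gmn gmn.
  have [a ay Wa] := Wc y (my mn); exists a, y; split => //; lra.
- have [gA|gA] := leP (g A + eps) (g n).
  + have gAn : g A < g n by lra.
    have [y [hy [Ay _] _]] := separating_point eps_gt0 gAn gAn.
    exists A, y; split; first exact: ltW (Ay An).
    by have := W_ge_rise (ltW (Ay An)); have := h_le_g A; lra.
  + exists n, n; split => //.
    by have := W_ge_dist (lexx n); rewrite subrr normr0; lra.
Qed.

Lemma pvar_le_W A eps k : 0 < eps ->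
  exists a b, a <= b /\ pvar g A k <= W a b + eps * (2 * k)%:R + eps.
Proof.
move=> eps_gt0; have A_le : A <= A + k%:Z by lia.
have e_ge0 : 0 <= eps * (2 * k)%:R by rewrite mulr_ge0 // ltW.
exact: charged_le_W A_le eps_gt0 e_ge0 (charged_pvar A k eps_gt0).
Qed.

End Charging.

Section WindowAverage.
Variables (R : realType) (f : int -> R).
Implicit Types (n : int) (r s : nat).

Lemma window_avg_le n r s (K : R) :
  (forall k : 'I_(r + s + 1), `|f (n - r%:Z + k%:Z)| <= K) -> window_avg f n r s <= K.
Proof.
move=> fK; rewrite /window_avg ler_pdivrMr; last by rewrite ltr0n addn1.
apply: le_trans (ler_sum _ (fun i _ => fK i)) _.
by rewrite sumr_const card_ord mulr_natr.
Qed.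

Lemma window_avg_gt n r s t : t < window_avg f n r s ->
  exists2 k, (k <= r + s)%N & t < `|f (n - r%:Z + k%:Z)|.
Proof.
move=> t_lt; apply: contrapT => small.
suff : window_avg f n r s <= t by rewrite leNgt t_lt.
apply: window_avg_le => k; rewrite leNgt; apply/negP => fk.
by apply: small; exists k => //; have := ltn_ord k; lia.
Qed.

Lemma window_avg_recenter n r s k : (k <= r + s)%N ->
  window_avg f (n - r%:Z + k%:Z) k (r + s - k) = window_avg f n r s.
Proof.
move=> kle; rewrite /window_avg.
have -> : (k + (r + s - k))%N = (r + s)%N by lia.
by congr (_ / _); apply: eq_bigr => i _; rewrite addrK.
Qed.

Lemma maxop_le n t : (forall r s, window_avg f n r s <= t) -> maxop f n <= t.
Proof.
move=> avg_le; apply: ge_sup; first by exists (window_avg f n 0 0), 0%N => //; exists 0%N.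
by move=> _ [r _ [s _ <-]].
Qed.

Variable K : R.
Hypothesis f_le : forall j, `|f j| <= K.

Lemma has_sup_window_avg n :
  has_sup [set window_avg f n r s | r in [set: nat] & s in [set: nat]].
Proof.
split; first by exists (window_avg f n 0 0), 0%N => //; exists 0%N.
by exists K => _ [r _ [s _ <-]]; apply: window_avg_le.
Qed.

Lemma window_avg_le_maxop n r s : window_avg f n r s <= maxop f n.
Proof.
apply: ub_le_sup; first exact: (has_sup_window_avg n).2.
by exists r => //; exists s.
Qed.

Lemma maxop_sup_approx n eta : 0 < eta ->
  exists r s, maxop f n - eta < window_avg f n r s.
Proof.
move=> eta_gt0.
by have [_ [r _ [s _ <-]] lt] := sup_adherent eta_gt0 (has_sup_window_avg n); exists r, s.
Qed.

Lemma norm_le_maxop n : `|f n| <= maxop f n.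
Proof.
apply: le_trans (window_avg_le_maxop n 0 0).
by rewrite /window_avg big_ord1 /= subr0 addr0 divr1.
Qed.

Lemma maxop_separation x eta : 0 < eta -> exists y, maxop f x - eta < `|f y| /\
  forall p, maxop f p <= maxop f x - eta -> (p <= x -> p < y) /\ (x <= p -> y < p).
Proof.
move=> eta_gt0; have [r [s avg_gt]] := maxop_sup_approx x eta_gt0.
have [k kle fk] := window_avg_gt avg_gt.
exists (x - r%:Z + k%:Z); split => // p p_small.
suff : p < x - r%:Z \/ x + s%:Z < p by case=> ?; split => ?; lia.
have [/andP[rp ps]|] := boolP ((x - r%:Z <= p) && (p <= x + s%:Z)); last first.
  by rewrite negb_and -!ltNge => /orP[]; [left | right].
exfalso.
pose j := absz (p - (x - r%:Z))%R.
have pE : p = x - r%:Z + j%:Z by rewrite /j; lia.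
have jle : (j <= r + s)%N by rewrite /j; lia.
have := window_avg_le_maxop p j (r + s - j).
by rewrite {1}pE window_avg_recenter //; lra.
Qed.

End WindowAverage.

Lemma Var_maxop_le (R : realType) (f : int -> R) :
  (Var f < +oo)%E -> (Var (maxop f) <= Var f)%E.
Proof.
move=> Vf; have f_le := norm_le_Var Vf.
apply: Var_le => A k; rewrite (fineK_Var Vf) lee_fin.
apply/ler_addgt0Pr => e e_gt0.
pose eps := e / (2 * k + 1)%:R.
have eps_gt0 : 0 < eps by rewrite divr_gt0 // ltr0n addn1.
have epsE : eps * (2 * k)%:R + eps = e.
  have k1 : (2 * k + 1)%:R != 0 :> R by rewrite pnatr_eq0 addn1.
  by move: k1; rewrite /eps natrD => k1; field.
have [a [b [ab pvar_le]]] := pvar_le_W (norm_le_maxop f_le)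
  (maxop_separation f_le) (@varID R f)
  (fun a b ab => le_trans (ler_dist_dist _ _) (ler_dist_varI f ab)) A k eps_gt0.
by have := pvar_le_fine a `|b - a|%N Vf; rewrite -/(varI f a b); lra.
Qed.

Section Delta.
Variable R : realType.

Definition delta0 (n : int) : R := if n == 0 then 1 else 0.

Lemma delta0_le1 j : `|delta0 j| <= 1.
Proof. by rewrite /delta0; case: ifP; rewrite ?normr1 ?normr0. Qed.

Lemma delta0_eq0 j : j != 0 -> `|delta0 j| = 0.
Proof. by rewrite /delta0 => /negbTE->; rewrite normr0. Qed.

Lemma sum_delta0_le1 b L : \sum_(i < L) `|delta0 (b + i%:Z)| <= 1.
Proof.
elim: L b => [|L IH] b; first by rewrite big_ord0.
rewrite big_ord_recl /= addr0.
under eq_bigr => i _ do rewrite /bump /= add1n -addn1 PoszD addrA addrAC.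
have [->|b0] := eqVneq b 0.
- rewrite big1 ?addr0 ?delta0_le1 // => i _.
  by apply: delta0_eq0; rewrite add0r; lia.
- by rewrite delta0_eq0 // add0r IH.
Qed.

Lemma pvar_delta0_le2 a k : pvar delta0 a k <= 2.
Proof.
rewrite /pvar; apply: le_trans (ler_sum _ (fun i _ => ler_normB _ _)) _.
rewrite big_split /=.
have := sum_delta0_le1 (a + 1) k; have := sum_delta0_le1 a k.
under eq_bigr => i _ do rewrite addrAC.
lra.
Qed.

Lemma Var_delta0_le2 : (Var delta0 <= 2%:E)%E.
Proof. by apply: Var_le => a k; rewrite lee_fin pvar_delta0_le2. Qed.

(* A window around [x] meets [0] only if it has more than [|x|] points. *)
Lemma maxop_delta0_le x : maxop delta0 x <= ((absz x).+1%:R)^-1.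
Proof.
apply: maxop_le => r s; rewrite /window_avg ler_pdivrMr ?ltr0n ?addn1 //.
have [long|short] := leqP (absz x) (r + s).
- apply: le_trans (sum_delta0_le1 _ _) _.
  by rewrite -ler_pdivrMl ?invr_gt0 ?ltr0n // invrK mulr1 ler_nat; lia.
- rewrite big1 ?mulr_ge0 ?invr_ge0 // => i _.
  by apply: delta0_eq0; have := ltn_ord i; lia.
Qed.

Lemma maxop_delta0_ge1 : 1 <= maxop delta0 0.
Proof.
by have := norm_le_maxop delta0_le1 0; rewrite /delta0 eqxx normr1.
Qed.

Lemma Var_maxop_delta0_ge (N : nat) :
  ((2 * (1 - N.+1%:R^-1))%:E <= Var (maxop delta0))%E.
Proof.
apply: le_trans (pvar_le_Var _ (- N%:Z) (N + N)).
rewrite lee_fin pvarD.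
have := ler_dist_pvar (maxop delta0) (- N%:Z) N.
have := ler_dist_pvar (maxop delta0) (- N%:Z + N%:Z) N.
rewrite addNr add0r => rise fall.
have := maxop_delta0_le N; have := maxop_delta0_le (- N%:Z).
rewrite abszN absz_nat => le_mN le_N.
rewrite distrC in rise.
have := le_trans (ler_norm _) rise; have := le_trans (ler_norm _) fall.
have := maxop_delta0_ge1; set t := N.+1%:R^-1 in le_mN le_N *; lra.
Qed.

End Delta.

Lemma Var_maxop_not_contraction (R : realType) (C : R) : C < 1 ->
  ~ (forall f : int -> R, (Var f < +oo)%E -> (Var (maxop f) <= C%:E * Var f)%E).
Proof.
move=> C_lt1 contr.
have Vd_fin : (Var (delta0 R) < +oo)%E := le_lt_trans (Var_delta0_le2 R) (ltry _).
have VdE := fineK_Var Vd_fin; set v := fine (Var (delta0 R)) in VdE.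
have v_ge0 : 0 <= v by rewrite -lee_fin -VdE Var_ge0.
have v_le2 : v <= 2 by rewrite -lee_fin -VdE Var_delta0_le2.
have := contr _ Vd_fin; rewrite VdE -EFinM => Vmax_le.
have Cv_lt2 : C * v < 2.
  have [C_le0|C_gt0] := lerP C 0.
  - by have := mulr_le0_ge0 C_le0 v_ge0; lra.
  - by have := ler_wpM2l (ltW C_gt0) v_le2; lra.
have Cv_half : C * v / 2 < 1 by lra.
have [N ltN] := ltr_add_invr Cv_half.
have := le_trans (Var_maxop_delta0_ge R N) Vmax_le; rewrite lee_fin.
set t := N.+1%:R^-1 in ltN *; lra.
Qed.

Local Open Scope ereal_scope.

Theorem theorem1 (R : realType) :
  (forall f : int -> R, Var f < +oo -> Var (maxop f) <= Var f) /\
  ~ (exists C : R, (C < 1)%R /\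
       forall f : int -> R, Var f < +oo -> Var (maxop f) <= C%:E * Var f).
Proof.
split; first exact: Var_maxop_le.
by case=> C [C_lt1]; apply: Var_maxop_not_contraction.
Qed.
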